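(* Let $f$ be a real ternary cubic form ($r=3$) and let $g$ be the AMWP metric of $f$ on $\mathbb{R}^3+iW$. Write $f_{ikp}=\partial^3 f/\partial y_i\partial y_k\partial y_p$ (constants). Let $(g^{p\bar q})$ be the inverse matrix of $(g_{i\bar j})$. Then at every point of $\mathbb{R}^3+iW$ and for all $i,j,k,l\in\{1,2,3\}$, $$R_{i\bar jk\bar l}=g_{i\bar j}g_{k\bar l}+g_{i\bar l}g_{k\bar j}-\sum_{p,q}\frac{g^{p\bar q}f_{ikp}f_{jlq}}{64\,f(y)^2}.$$
   Context: Let $f(y_1,\dots,y_r)$ be a real cubic form on $\mathbb{R}^r$. Its index cone $W$ is the open cone of $y$ with $f(y)>0$ at which the Hessian $(\partial^2f/\partial y_i\partial y_j)(y)$ has signature $(1,r-1)$. On $\mathbb{R}^r+iW\subset\mathbb{C}^r$, with coordinates $t_j=x_j+iy_j$, the AMWP metric of $f$ is the Kähler metric with potential $K_0=-\log f(y)$. Thus $g_{i\bar j}=\partial^2K_0/\partial t_i\partial\bar t_j=-\tfrac14\partial^2\log f/\partial y_i\partial y_j$. Its curvature tensor is $$R_{i\bar jk\bar l}=\frac{\partial^2 g_{i\bar j}}{\partial t_k\partial\bar t_l}-\sum_{d,e}g^{\bar e d}\frac{\partial g_{i\bar e}}{\partial t_k}\frac{\partial g_{\bar j d}}{\partial\bar t_l},$$ where $(g^{\bar e d})$ is the inverse of $(g_{i\bar j})$. *)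

From Stdlib Require Import Reals ClassicalEpsilon.
Open Scope R_scope.

(* Points of R^3 are represented as functions nat -> R (only indices 0,1,2 matter). *)
Definition vec := nat -> R.

Definition upd (y : vec) (i : nat) (s : R) : vec :=
  fun j => if Nat.eqb j i then y j + s else y j.

(* Partial derivative d F / d y_i at y (the unique limit, when it exists). *)
Definition pd (F : vec -> R) (i : nat) (y : vec) : R :=
  epsilon (inhabits 0) (fun l => derivable_pt_lim (fun s => F (upd y i s)) 0 l).

Definition sum3 (F : nat -> R) : R := F 0%nat + F 1%nat + F 2%nat.

(* Complex numbers as pairs (Re, Im). *)
Definition Cx := (R * R)%type.
Definition RtoC (a : R) : Cx := (a, 0).
Definition Cadd (z w : Cx) : Cx := (fst z + fst w, snd z + snd w).
Definition Csub (z w : Cx) : Cx := (fst z - fst w, snd z - snd w).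
Definition Cmul (z w : Cx) : Cx :=
  (fst z * fst w - snd z * snd w, fst z * snd w + snd z * fst w).
Definition Csum3 (F : nat -> Cx) : Cx := Cadd (Cadd (F 0%nat) (F 1%nat)) (F 2%nat).
Definition Cdelta (i j : nat) : Cx := if Nat.eqb i j then (1, 0) else (0, 0).

(* Functions on C^3 = R^3 + i R^3, point t = x + i y, complex valued. *)
Definition cfun := vec -> vec -> Cx.

Definition pdx (F : cfun) (k : nat) (x y : vec) : Cx :=
  (pd (fun x' => fst (F x' y)) k x, pd (fun x' => snd (F x' y)) k x).
Definition pdy (F : cfun) (k : nat) (x y : vec) : Cx :=
  (pd (fun y' => fst (F x y')) k y, pd (fun y' => snd (F x y')) k y).

(* Wirtinger derivatives: d/dt_k = 1/2 (d/dx_k - i d/dy_k),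
   d/d(conj t_k) = 1/2 (d/dx_k + i d/dy_k). *)
Definition dt (F : cfun) (k : nat) : cfun := fun x y =>
  let a := pdx F k x y in let b := pdy F k x y in
  ((fst a + snd b) / 2, (snd a - fst b) / 2).
Definition dtb (F : cfun) (k : nat) : cfun := fun x y =>
  let a := pdx F k x y in let b := pdy F k x y in
  ((fst a - snd b) / 2, (snd a + fst b) / 2).

Definition cubic (c : nat -> nat -> nat -> R) (y : vec) : R :=
  sum3 (fun a => sum3 (fun b => sum3 (fun d => c a b d * y a * y b * y d))).

Definition hess (f : vec -> R) (y : vec) (a b : nat) : R :=
  pd (fun z => pd f b z) a y.

Definition det3 (P : nat -> nat -> R) : R :=
  P 0%nat 0%nat * (P 1%nat 1%nat * P 2%nat 2%nat - P 1%nat 2%nat * P 2%nat 1%nat)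
  - P 0%nat 1%nat * (P 1%nat 0%nat * P 2%nat 2%nat - P 1%nat 2%nat * P 2%nat 0%nat)
  + P 0%nat 2%nat * (P 1%nat 0%nat * P 2%nat 1%nat - P 1%nat 1%nat * P 2%nat 0%nat).

Definition diag_1_m1_m1 (a b : nat) : R :=
  if Nat.eqb a b then (if Nat.eqb a 0 then 1 else -1) else 0.

(* Symmetric real 3x3 matrix M has signature (1,2): it is congruent
   (Sylvester) to diag(1,-1,-1). *)
Definition signature_1_2 (M : nat -> nat -> R) : Prop :=
  exists P : nat -> nat -> R, det3 P <> 0 /\
    forall a b, (a < 3)%nat -> (b < 3)%nat ->
      sum3 (fun m => sum3 (fun n => P m a * M m n * P n b)) = diag_1_m1_m1 a b.

Definition in_index_cone (f : vec -> R) (y : vec) : Prop :=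
  f y > 0 /\ signature_1_2 (hess f y).

Definition K0 (f : vec -> R) : cfun := fun x y => RtoC (- ln (f y)).
Definition gmet (f : vec -> R) (i j : nat) : cfun := dt (dtb (K0 f) j) i.

(* Curvature R_{i jbar k lbar} at (x,y), where Hinv e d = g^{ebar d}
   is the inverse matrix of (g_{i jbar}). *)
Definition curv (f : vec -> R) (Hinv : nat -> nat -> Cx) (i j k l : nat) (x y : vec) : Cx :=
  Csub (dt (dtb (gmet f i j) l) k x y)
       (Csum3 (fun d => Csum3 (fun e =>
          Cmul (Hinv e d) (Cmul (dt (gmet f i e) k x y) (dtb (gmet f d j) l x y))))).

Definition f3 (f : vec -> R) (i k p : nat) (y : vec) : R :=
  pd (fun z => pd (fun w => pd f p w) k z) i y.

From Stdlib Require Import Reals Lra Lia ClassicalEpsilon FunctionalExtensionality.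
From Coquelicot Require Import Hierarchy Derive AutoDerive.
Open Scope R_scope.

(* Put phi = - log f.  Every object on the tube R^3 + iW depends on y only, and for an
   x-independent function the Wirtinger derivatives are d/dt_k = -(i/2) d/dy_k and
   d/d(conj t_k) = (i/2) d/dy_k.  Hence g_ij = phi_ij / 4, d_k g_ie = -(i/8) phi_iek,
   d_lbar g_dj = (i/8) phi_djl and d_k d_lbar g_ij = phi_ijlk / 16, so that, with G the
   inverse of H = (phi_ab), the curvature is (phi_ijlk - sum G_ed phi_iek phi_djl) / 16.
   With P_a = f_a / f and r_abc = f_abc / f, the derivatives of phi are explicit polynomials
   in P, H and r (since f_abcd = 0), and homogeneity of f gives the Euler relations
   sum_m H_am y_m = P_a, sum_m r_abm y_m = P_a P_b - H_ab and sum_m P_m y_m = 3.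
   Contracting twice with G by means of these relations reduces the claim to a polynomial
   identity in P, H and r. *)

Definition kron (i j : nat) : R := if Nat.eqb i j then 1 else 0.

Lemma sum3_ext (F G : nat -> R) :
  (forall e, (e < 3)%nat -> F e = G e) -> sum3 F = sum3 G.
Proof. intro E; unfold sum3; rewrite !E by lia; reflexivity. Qed.

Lemma sum3_kron_l (i : nat) (X : nat -> R) :
  (i < 3)%nat -> sum3 (fun d => kron i d * X d) = X i.
Proof. intro Hi; destruct i as [|[|[|]]]; try lia; unfold sum3, kron; simpl; ring. Qed.

Lemma sum3_kron_r (i : nat) (X : nat -> R) :
  (i < 3)%nat -> sum3 (fun d => kron d i * X d) = X i.
Proof. intro Hi; destruct i as [|[|[|]]]; try lia; unfold sum3, kron; simpl; ring. Qed.

(* The third and fourth derivatives of phi = - log f, written through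
   P_a = f_a / f, H_ab = phi_ab and r_abk = f_abk / f: since d_k P_a = - H_ak,
   d_k H_ab = pot3 a b k and d_l r_abk = - r_abk P_l, differentiating pot3 gives pot4. *)
Definition pot3 (P : nat -> R) (H : nat -> nat -> R) (r : nat -> nat -> nat -> R)
  (a b k : nat) : R :=
  - r a b k + P a * P b * P k - H a b * P k - H a k * P b - H b k * P a.

Definition pot4 (P : nat -> R) (H : nat -> nat -> R) (r : nat -> nat -> nat -> R)
  (a b k l : nat) : R :=
  r a b k * P l - (H a l * P b * P k + P a * H b l * P k + P a * P b * H k l)
  - (pot3 P H r a b l * P k - H a b * H k l)
  - (pot3 P H r a k l * P b - H a k * H b l)
  - (pot3 P H r b k l * P a - H b k * H a l).

Section TubeIdentity.

Variables (P : nat -> R) (H : nat -> nat -> R) (r : nat -> nat -> nat -> R)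
  (G : nat -> nat -> R) (y : vec).

Hypothesis H_sym : forall a b, H a b = H b a.
Hypothesis r_sym12 : forall a b d, r a b d = r b a d.
Hypothesis r_sym23 : forall a b d, r a b d = r a d b.
Hypothesis H_G : forall i d, (i < 3)%nat -> (d < 3)%nat ->
  sum3 (fun e => H i e * G e d) = kron i d.
Hypothesis euler_P : forall a, sum3 (fun m => H a m * y m) = P a.
Hypothesis euler_r : forall a b, sum3 (fun m => r a b m * y m) = P a * P b - H a b.
Hypothesis euler_deg : sum3 (fun m => P m * y m) = 3.

Lemma G_sym e d : (e < 3)%nat -> (d < 3)%nat -> G e d = G d e.
Proof.
  intros He Hd.
  transitivity (sum3 (fun m => kron m e * G m d));
    [symmetry; apply (sum3_kron_r e (fun m => G m d)), He|].
  transitivity (sum3 (fun n => G n e * sum3 (fun m => H n m * G m d))).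
  - transitivity (sum3 (fun m => sum3 (fun n => H m n * G n e) * G m d)).
    + apply sum3_ext; intros m Hm; rewrite H_G by assumption; reflexivity.
    + unfold sum3; rewrite (H_sym 1 0), (H_sym 2 0), (H_sym 2 1); ring.
  - rewrite <- (sum3_kron_r d (fun n => G n e)) by exact Hd.
    apply sum3_ext; intros n Hn; rewrite H_G by assumption; ring.
Qed.


(* By the first Euler relation, G maps P to y. *)
Lemma G_P d : (d < 3)%nat -> sum3 (fun e => G e d * P e) = y d.
Proof.
  intro Hd.
  transitivity (sum3 (fun m => sum3 (fun e => H m e * G e d) * y m)).
  - rewrite (sum3_ext _ (fun e => G e d * sum3 (fun m => H e m * y m)))
      by (intros; rewrite euler_P; reflexivity).
    unfold sum3; rewrite (H_sym 1 0), (H_sym 2 0), (H_sym 2 1); ring.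
  - rewrite <- (sum3_kron_r d y) by exact Hd.
    apply sum3_ext; intros m Hm; rewrite H_G by assumption; ring.
Qed.

Lemma pot3_sym12 a b k : pot3 P H r a b k = pot3 P H r b a k.
Proof. unfold pot3; rewrite (H_sym a b), (r_sym12 a b k); ring. Qed.

Lemma pot3_sym23 a b k : pot3 P H r a b k = pot3 P H r a k b.
Proof. unfold pot3; rewrite (H_sym b k), (r_sym23 a b k); ring. Qed.

(* Euler relation for the third derivatives: phi_ab is homogeneous of degree -2. *)
Lemma euler_pot3 a b : sum3 (fun m => pot3 P H r a b m * y m) = -2 * H a b.
Proof.
  transitivity (- sum3 (fun m => r a b m * y m) + (P a * P b - H a b) * sum3 (fun m => P m * y m)
    - P b * sum3 (fun m => H a m * y m) - P a * sum3 (fun m => H b m * y m)).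
  - unfold pot3, sum3; ring.
  - rewrite euler_r, euler_deg, !euler_P; ring.
Qed.

(* One contraction of pot3 with G, computed with G H = 1 and G P = y. *)
Lemma contract_pot3 i k d : (i < 3)%nat -> (k < 3)%nat -> (d < 3)%nat ->
  sum3 (fun e => G e d * pot3 P H r i e k)
  = - sum3 (fun e => G e d * r i e k) + y d * (P i * P k - H i k)
    - kron i d * P k - kron k d * P i.
Proof.
  intros Hi Hk Hd.
  transitivity (- sum3 (fun e => G e d * r i e k)
    + (P i * P k - H i k) * sum3 (fun e => G e d * P e)
    - P k * sum3 (fun e => H i e * G e d) - P i * sum3 (fun e => H k e * G e d)).
  - unfold pot3, sum3; rewrite (H_sym 0 k), (H_sym 1 k), (H_sym 2 k); ring.
  - rewrite G_P, !H_G by assumption; ring.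
Qed.

Lemma double_contraction i j k l :
  (i < 3)%nat -> (j < 3)%nat -> (k < 3)%nat -> (l < 3)%nat ->
  sum3 (fun d => sum3 (fun e => G e d * (pot3 P H r i e k * pot3 P H r d j l)))
  = sum3 (fun p => sum3 (fun q => G q p * (r i k p * r j l q)))
    - (P i * P k - H i k) * (P j * P l - H j l) + r i j k * P l + r i l k * P j
    - 2 * (P i * P k - H i k) * H j l - P k * pot3 P H r i j l - P i * pot3 P H r k j l.
Proof.
  intros Hi Hj Hk Hl.
  assert (Inner : forall e, (e < 3)%nat ->
    sum3 (fun d => G e d * pot3 P H r d j l)
    = - sum3 (fun d => G d e * r j d l) + y e * (P j * P l - H j l)
      - kron j e * P l - kron l e * P j).
  { intros e He; rewrite <- contract_pot3 by assumption.
    apply sum3_ext; intros d Hd; rewrite G_sym, pot3_sym12 by assumption; reflexivity. }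
  assert (Euler_r : sum3 (fun e => r i e k * y e) = P i * P k - H i k).
  { rewrite <- euler_r; apply sum3_ext; intros; rewrite r_sym23; reflexivity. }
  assert (Euler_pot3 : sum3 (fun d => pot3 P H r d j l * y d) = -2 * H j l).
  { rewrite <- euler_pot3; apply sum3_ext; intros; rewrite pot3_sym12, pot3_sym23; reflexivity. }
  assert (Reindex : sum3 (fun e => r i e k * sum3 (fun d => G d e * r j d l))
                    = sum3 (fun p => sum3 (fun q => G q p * (r i k p * r j l q)))).
  { apply sum3_ext; intros e He; rewrite (r_sym23 i e k).
    unfold sum3; rewrite (r_sym23 j 0 l), (r_sym23 j 1 l), (r_sym23 j 2 l); ring. }
  transitivity (sum3 (fun d => sum3 (fun e => G e d * pot3 P H r i e k) * pot3 P H r d j l)).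
  { unfold sum3; ring. }
  rewrite (sum3_ext _ (fun d => (- sum3 (fun e => G e d * r i e k) + y d * (P i * P k - H i k)
    - kron i d * P k - kron k d * P i) * pot3 P H r d j l))
    by (intros; rewrite contract_pot3 by assumption; reflexivity).
  transitivity (- sum3 (fun e => r i e k * sum3 (fun d => G e d * pot3 P H r d j l))
    + (P i * P k - H i k) * sum3 (fun d => pot3 P H r d j l * y d)
    - P k * sum3 (fun d => kron i d * pot3 P H r d j l)
    - P i * sum3 (fun d => kron k d * pot3 P H r d j l)).
  { unfold sum3; ring. }
  rewrite Euler_pot3, !sum3_kron_l by assumption.
  rewrite (sum3_ext _ (fun e => r i e k * (- sum3 (fun d => G d e * r j d l)
    + y e * (P j * P l - H j l) - kron j e * P l - kron l e * P j)))
    by (intros; rewrite Inner by assumption; reflexivity).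
  transitivity (- (- sum3 (fun e => r i e k * sum3 (fun d => G d e * r j d l))
    + (P j * P l - H j l) * sum3 (fun e => r i e k * y e)
    - P l * sum3 (fun e => kron j e * r i e k) - P j * sum3 (fun e => kron l e * r i e k))
    + (P i * P k - H i k) * (-2 * H j l) - P k * pot3 P H r i j l - P i * pot3 P H r k j l).
  { unfold sum3; ring. }
  rewrite Euler_r, Reindex, !sum3_kron_l by assumption; ring.
Qed.

(* phi_ijlk - sum G_ed phi_iek phi_djl = H_ij H_kl + H_il H_kj - sum G_qp r_ikp r_jlq:
   the curvature identity, up to the common factor 1/16. *)
Lemma tube_curvature_identity i j k l :
  (i < 3)%nat -> (j < 3)%nat -> (k < 3)%nat -> (l < 3)%nat ->
  pot4 P H r i j l k
  - sum3 (fun d => sum3 (fun e => G e d * (pot3 P H r i e k * pot3 P H r d j l)))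
  = H i j * H k l + H i l * H k j
    - sum3 (fun p => sum3 (fun q => G q p * (r i k p * r j l q))).
Proof.
  intros Hi Hj Hk Hl; rewrite double_contraction by assumption.
  unfold pot4, pot3.
  rewrite (H_sym l k), (H_sym j k), (r_sym12 k j l), (r_sym23 j k l); ring.
Qed.

End TubeIdentity.

Lemma upd_0 (z : vec) (a : nat) : upd z a 0 = z.
Proof.
  apply functional_extensionality; intro j; unfold upd; destruct (Nat.eqb j a); ring.
Qed.

Lemma pd_of_lim (F : vec -> R) (a : nat) (z : vec) (l : R) :
  derivable_pt_lim (fun s => F (upd z a s)) 0 l -> pd F a z = l.
Proof.
  intro Hl; unfold pd.
  pose proof (epsilon_spec (inhabits 0)
    (fun l => derivable_pt_lim (fun s => F (upd z a s)) 0 l) (ex_intro _ l Hl)) as Heps.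
  exact (uniqueness_limite _ _ _ _ Heps Hl).
Qed.

Lemma pd_const (k : R) (a : nat) (z : vec) : pd (fun _ => k) a z = 0.
Proof. apply pd_of_lim, derivable_pt_lim_const. Qed.

Definition has_pd (U : vec -> Prop) (F : vec -> R) (a : nat) (D : vec -> R) : Prop :=
  forall z, U z -> derivable_pt_lim (fun s => F (upd z a s)) 0 (D z).

Definition axis_open (U : vec -> Prop) : Prop :=
  forall z a, (a < 3)%nat -> U z ->
    exists d, 0 < d /\ forall s, Rabs s < d -> U (upd z a s).

Section PartialDerivativesOn.

Variable U : vec -> Prop.

Lemma has_pd_ext F a D D' :
  (forall z, U z -> D z = D' z) -> has_pd U F a D -> has_pd U F a D'.
Proof. intros E HD z Hz; rewrite <- E by exact Hz; apply HD, Hz. Qed.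

Lemma has_pd_const k a : has_pd U (fun _ => k) a (fun _ => 0).
Proof. intros z _; apply derivable_pt_lim_const. Qed.

Lemma has_pd_opp F a D : has_pd U F a D -> has_pd U (fun w => - F w) a (fun z => - D z).
Proof. intros HD z Hz; exact (derivable_pt_lim_opp _ _ _ (HD z Hz)). Qed.

Lemma has_pd_plus F F' a D D' : has_pd U F a D -> has_pd U F' a D' ->
  has_pd U (fun w => F w + F' w) a (fun z => D z + D' z).
Proof. intros HD HD' z Hz; exact (derivable_pt_lim_plus _ _ _ _ _ (HD z Hz) (HD' z Hz)). Qed.

Lemma has_pd_minus F F' a D D' : has_pd U F a D -> has_pd U F' a D' ->
  has_pd U (fun w => F w - F' w) a (fun z => D z - D' z).
Proof. intros HD HD' z Hz; exact (derivable_pt_lim_minus _ _ _ _ _ (HD z Hz) (HD' z Hz)). Qed.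

Lemma has_pd_mult F F' a D D' : has_pd U F a D -> has_pd U F' a D' ->
  has_pd U (fun w => F w * F' w) a (fun z => D z * F' z + F z * D' z).
Proof.
  intros HD HD' z Hz.
  pose proof (derivable_pt_lim_mult _ _ _ _ _ (HD z Hz) (HD' z Hz)) as Hm.
  cbv beta in Hm; rewrite upd_0 in Hm; exact Hm.
Qed.

Lemma has_pd_div_const F a D k :
  has_pd U F a D -> has_pd U (fun w => F w / k) a (fun z => D z / k).
Proof.
  intro HD; eapply has_pd_ext; [|exact (has_pd_mult _ _ _ _ _ HD (has_pd_const (/ k) a))].
  intros z _; cbv beta; unfold Rdiv; ring.
Qed.

Lemma has_pd_inv F a D : (forall z, U z -> F z <> 0) -> has_pd U F a D ->
  has_pd U (fun w => / F w) a (fun z => - D z / (F z * F z)).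
Proof.
  intros NZ HD z Hz.
  pose proof (derivable_pt_lim_div (fun _ => 1) (fun s => F (upd z a s)) 0 0 (D z)
    (derivable_pt_lim_const 1 0) (HD z Hz)) as Hq.
  unfold div_fct in Hq; cbv beta in Hq; rewrite upd_0 in Hq; specialize (Hq (NZ z Hz)).
  apply (derivable_pt_lim_ext (fun s => 1 / F (upd z a s)));
    [intro; cbv beta; unfold Rdiv; ring|].
  replace (- D z / (F z * F z)) with ((0 * F z - D z * 1) / (F z)²)
    by (unfold Rsqr; field; apply NZ, Hz).
  exact Hq.
Qed.

Lemma has_pd_ln F a D : (forall z, U z -> 0 < F z) -> has_pd U F a D ->
  has_pd U (fun w => ln (F w)) a (fun z => D z / F z).
Proof.
  intros Pos HD z Hz.
  pose proof (derivable_pt_lim_comp (fun s => F (upd z a s)) ln 0 (D z) (/ F z) (HD z Hz)) as Hc.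
  cbv beta in Hc; rewrite upd_0 in Hc; specialize (Hc (derivable_pt_lim_ln _ (Pos z Hz))).
  replace (D z / F z) with (/ F z * D z) by (unfold Rdiv; ring); exact Hc.
Qed.

Hypothesis U_open : axis_open U.

(* On an axis-open set, pd only depends on the values of F on U, so it is computed by
   any function agreeing with F on U. *)
Lemma pd_on F F' a D z : (a < 3)%nat ->
  (forall w, U w -> F w = F' w) -> has_pd U F' a D -> U z -> pd F a z = D z.
Proof.
  intros Ha E HD Hz; apply pd_of_lim.
  destruct (U_open z a Ha Hz) as [d [Hd Hnear]].
  apply (derivable_pt_lim_locally_ext (fun s => F' (upd z a s)) _ 0 (-d) d);
    [lra| |exact (HD z Hz)].
  intros s Hs; symmetry; apply E, Hnear, Rabs_def1; lra.
Qed.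

End PartialDerivativesOn.

Definition lift (u v : vec -> R) : cfun := fun _ y => (u y, v y).

Lemma dt_real (u : vec -> R) (k : nat) :
  dt (lift u (fun _ => 0)) k = lift (fun _ => 0) (fun y => - pd u k y / 2).
Proof.
  apply functional_extensionality; intro x; apply functional_extensionality; intro y.
  unfold dt, pdx, pdy, lift; cbn [fst snd]; rewrite !pd_const.
  change (fun y' => u y') with u; f_equal; lra.
Qed.

Lemma dtb_real (u : vec -> R) (k : nat) :
  dtb (lift u (fun _ => 0)) k = lift (fun _ => 0) (fun y => pd u k y / 2).
Proof.
  apply functional_extensionality; intro x; apply functional_extensionality; intro y.
  unfold dtb, pdx, pdy, lift; cbn [fst snd]; rewrite !pd_const.
  change (fun y' => u y') with u; f_equal; lra.
Qed.

Lemma dt_imag (v : vec -> R) (k : nat) :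
  dt (lift (fun _ => 0) v) k = lift (fun y => pd v k y / 2) (fun _ => 0).
Proof.
  apply functional_extensionality; intro x; apply functional_extensionality; intro y.
  unfold dt, pdx, pdy, lift; cbn [fst snd]; rewrite !pd_const.
  change (fun y' => v y') with v; f_equal; lra.
Qed.

(* The metric coefficient obtained from K0 = - log f by two Wirtinger derivatives. *)
Definition gcoef (f : vec -> R) (i j : nat) (y : vec) : R :=
  pd (fun y' => pd (fun w => - ln (f w)) j y' / 2) i y / 2.

Lemma gmet_lift (f : vec -> R) (i j : nat) : gmet f i j = lift (gcoef f i j) (fun _ => 0).
Proof.
  unfold gmet; change (K0 f) with (lift (fun y => - ln (f y)) (fun _ => 0)).
  rewrite dtb_real, dt_imag; reflexivity.
Qed.

(* The cubic form and its derivatives: f_abd (constant), f_ab (linear), f_a (quadratic). *)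
Definition d3cubic (c : nat -> nat -> nat -> R) (a b d : nat) : R :=
  c a b d + c a d b + c b a d + c b d a + c d a b + c d b a.

Definition d2cubic (c : nat -> nat -> nat -> R) (a b : nat) (w : vec) : R :=
  sum3 (fun d => d3cubic c a b d * w d).

Definition dcubic (c : nat -> nat -> nat -> R) (a : nat) (w : vec) : R :=
  sum3 (fun b => sum3 (fun d => d3cubic c a b d * w b * w d)) / 2.

Ltac derive_polynomial :=
  apply is_derive_Reals; unfold cubic, dcubic, d2cubic, d3cubic, sum3, upd; simpl;
  auto_derive; auto; field.

Lemma has_pd_cubic U c a : (a < 3)%nat -> has_pd U (cubic c) a (dcubic c a).
Proof. intros Ha z _; destruct a as [|[|[|]]]; try lia; derive_polynomial. Qed.

Lemma has_pd_dcubic U c a b : (a < 3)%nat -> has_pd U (dcubic c b) a (d2cubic c b a).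
Proof. intros Ha z _; destruct a as [|[|[|]]]; try lia; derive_polynomial. Qed.

Lemma has_pd_d2cubic U c a b d :
  (a < 3)%nat -> has_pd U (d2cubic c b d) a (fun _ => d3cubic c b d a).
Proof. intros Ha z _; destruct a as [|[|[|]]]; try lia; derive_polynomial. Qed.

Lemma d3cubic_sym12 c a b d : d3cubic c a b d = d3cubic c b a d.
Proof. unfold d3cubic; ring. Qed.

Lemma d3cubic_sym23 c a b d : d3cubic c a b d = d3cubic c a d b.
Proof. unfold d3cubic; ring. Qed.

Lemma euler_cubic c w : sum3 (fun m => dcubic c m w * w m) = 3 * cubic c w.
Proof. unfold dcubic, d3cubic, cubic, sum3; field. Qed.

Lemma euler_dcubic c a w : sum3 (fun m => d2cubic c a m w * w m) = 2 * dcubic c a w.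
Proof. unfold d2cubic, dcubic, sum3; field. Qed.

(* The set {f > 0}, which contains the index cone, is axis-open by continuity. *)
Lemma cubic_pos_axis_open c : axis_open (fun w => 0 < cubic c w).
Proof.
  intros z a Ha Hz.
  assert (Dz : derivable_pt (fun s => cubic c (upd z a s)) 0)
    by (exists (dcubic c a z); apply (has_pd_cubic (fun _ => True)); auto).
  pose proof (derivable_continuous_pt _ _ Dz) as Cz.
  destruct (Cz (cubic c z) Hz) as [d [Hd Hnear]]; simpl in Hnear.
  exists d; split; [exact Hd|]; intros s Hs.
  destruct (Req_dec s 0) as [->|Hs0]; [rewrite upd_0; exact Hz|].
  specialize (Hnear s); rewrite upd_0 in Hnear; unfold R_dist, D_x, no_cond in Hnear.
  assert (Hclose : Rabs (cubic c (upd z a s) - cubic c z) < cubic c z).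
  { apply Hnear; repeat split; [congruence | rewrite Rminus_0_r; exact Hs]. }
  apply Rabs_def2 in Hclose; lra.
Qed.

(* The data of the potential phi = - log f on {f > 0}: P_a = f_a / f, the Hessian
   H_ab = phi_ab = P_a P_b - f_ab / f, and r_abd = f_abd / f. *)
Definition grad_log (c : nat -> nat -> nat -> R) (a : nat) (w : vec) : R :=
  dcubic c a w / cubic c w.

Definition hess_pot (c : nat -> nat -> nat -> R) (a b : nat) (w : vec) : R :=
  grad_log c a w * grad_log c b w - d2cubic c a b w / cubic c w.

Definition d3_ratio (c : nat -> nat -> nat -> R) (a b d : nat) (w : vec) : R :=
  d3cubic c a b d / cubic c w.

Definition pot3_c (c : nat -> nat -> nat -> R) (a b k : nat) (w : vec) : R :=
  pot3 (fun m => grad_log c m w) (fun m n => hess_pot c m n w) (fun m n p => d3_ratio c m n p w)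
    a b k.

Definition pot4_c (c : nat -> nat -> nat -> R) (a b k l : nat) (w : vec) : R :=
  pot4 (fun m => grad_log c m w) (fun m n => hess_pot c m n w) (fun m n p => d3_ratio c m n p w)
    a b k l.

Section CubicPotential.

Variable c : nat -> nat -> nat -> R.

Local Notation Uc := (fun w => 0 < cubic c w).
Local Notation pd_pos := (pd_on Uc (cubic_pos_axis_open c)).

Lemma hess_pot_sym a b w : hess_pot c a b w = hess_pot c b a w.
Proof. unfold hess_pot, d2cubic, d3cubic, sum3, Rdiv; ring. Qed.

Lemma has_pd_inv_cubic a : (a < 3)%nat ->
  has_pd Uc (fun w => / cubic c w) a (fun w => - grad_log c a w / cubic c w).
Proof.
  intro Ha; eapply has_pd_ext;
    [| apply has_pd_inv; [intros z Hz; lra | apply has_pd_cubic, Ha]].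
  intros z Hz; unfold grad_log; field; lra.
Qed.

Lemma has_pd_grad_log a b : (a < 3)%nat ->
  has_pd Uc (grad_log c b) a (fun w => - hess_pot c b a w).
Proof.
  intro Ha; unfold grad_log at 1, Rdiv; eapply has_pd_ext;
    [| apply has_pd_mult; [apply has_pd_dcubic, Ha | apply has_pd_inv_cubic, Ha]].
  intros z Hz; unfold hess_pot, grad_log; field; lra.
Qed.

Lemma has_pd_d2ratio a b k : (k < 3)%nat ->
  has_pd Uc (fun w => d2cubic c a b w / cubic c w) k
    (fun w => d3_ratio c a b k w - d2cubic c a b w / cubic c w * grad_log c k w).
Proof.
  intro Hk; unfold Rdiv at 1; eapply has_pd_ext;
    [| apply has_pd_mult; [apply has_pd_d2cubic, Hk | apply has_pd_inv_cubic, Hk]].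
  intros z Hz; unfold d3_ratio, grad_log; field; lra.
Qed.

Lemma has_pd_d3_ratio a b d k : (k < 3)%nat ->
  has_pd Uc (d3_ratio c a b d) k (fun w => - d3_ratio c a b d w * grad_log c k w).
Proof.
  intro Hk; unfold d3_ratio at 1, Rdiv; eapply has_pd_ext;
    [| apply has_pd_mult; [apply has_pd_const | apply has_pd_inv_cubic, Hk]].
  intros z Hz; unfold d3_ratio, grad_log; field; lra.
Qed.

Lemma has_pd_hess_pot a b k : (k < 3)%nat -> has_pd Uc (hess_pot c a b) k (pot3_c c a b k).
Proof.
  intro Hk; unfold hess_pot at 1; eapply has_pd_ext;
    [| apply has_pd_minus;
       [apply has_pd_mult; apply has_pd_grad_log, Hk | apply has_pd_d2ratio, Hk]].
  intros z Hz; unfold pot3_c, pot3, hess_pot; ring.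
Qed.

Lemma has_pd_pot3 a b k l : (l < 3)%nat -> has_pd Uc (pot3_c c a b k) l (pot4_c c a b k l).
Proof.
  intro Hl; unfold pot3_c at 1, pot3; cbv beta; eapply has_pd_ext;
    [| repeat first [ apply has_pd_d3_ratio, Hl | apply has_pd_grad_log, Hl
                    | apply has_pd_hess_pot, Hl
                    | apply has_pd_minus | apply has_pd_plus | apply has_pd_mult
                    | apply has_pd_opp ] ].
  intros z Hz; unfold pot4_c, pot4, pot3_c, pot3; ring.
Qed.

Lemma has_pd_phi j : (j < 3)%nat ->
  has_pd Uc (fun w => - ln (cubic c w)) j (fun w => - grad_log c j w).
Proof.
  intro Hj; eapply has_pd_ext;
    [| apply has_pd_opp, has_pd_ln; [intros z Hz; exact Hz | apply has_pd_cubic, Hj]].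
  reflexivity.
Qed.

Lemma gcoef_cubic i j w : (i < 3)%nat -> (j < 3)%nat -> 0 < cubic c w ->
  gcoef (cubic c) i j w = hess_pot c i j w / 4.
Proof.
  intros Hi Hj Hw; unfold gcoef.
  rewrite (pd_pos _ (fun w => - grad_log c j w / 2) i
             (fun w => hess_pot c j i w / 2) w Hi).
  - rewrite hess_pot_sym; field.
  - intros v Hv; rewrite (pd_pos _ _ j _ v Hj
                            (fun _ _ => eq_refl) (has_pd_phi j Hj) Hv); reflexivity.
  - eapply has_pd_ext; [| apply has_pd_div_const, has_pd_opp, has_pd_grad_log, Hi].
    intros; cbv beta; field.
  - exact Hw.
Qed.

Lemma pd_gcoef i j l w : (i < 3)%nat -> (j < 3)%nat -> (l < 3)%nat -> 0 < cubic c w ->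
  pd (gcoef (cubic c) i j) l w = pot3_c c i j l w / 4.
Proof.
  intros Hi Hj Hl Hw.
  apply (pd_pos _ (fun w => hess_pot c i j w / 4) l (fun w => pot3_c c i j l w / 4));
    [exact Hl | | | exact Hw].
  - intros v Hv; apply gcoef_cubic; assumption.
  - apply has_pd_div_const, has_pd_hess_pot, Hl.
Qed.

(* ... and the derivatives of (d_l gcoef) / 2, the coefficient of d/d(conj t_l) g, are
   pot4 / 8. *)
Lemma pd2_gcoef i j l k w :
  (i < 3)%nat -> (j < 3)%nat -> (l < 3)%nat -> (k < 3)%nat -> 0 < cubic c w ->
  pd (fun y => pd (gcoef (cubic c) i j) l y / 2) k w = pot4_c c i j l k w / 8.
Proof.
  intros Hi Hj Hl Hk Hw.
  apply (pd_pos _ (fun w => pot3_c c i j l w / 8) k (fun w => pot4_c c i j l k w / 8));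
    [exact Hk | | | exact Hw].
  - intros v Hv; rewrite pd_gcoef by assumption; field.
  - apply has_pd_div_const, has_pd_pot3, Hk.
Qed.

Lemma f3_cubic i k p w : (i < 3)%nat -> (k < 3)%nat -> (p < 3)%nat -> 0 < cubic c w ->
  f3 (cubic c) i k p w = d3cubic c i k p.
Proof.
  intros Hi Hk Hp Hw; unfold f3.
  rewrite (pd_pos _ (d2cubic c p k) i (fun _ => d3cubic c p k i) w Hi);
    [| | apply has_pd_d2cubic, Hi | exact Hw].
  - rewrite d3cubic_sym23, d3cubic_sym12, d3cubic_sym23; reflexivity.
  - intros v Hv; apply (pd_pos _ (dcubic c p) k); [exact Hk | | apply has_pd_dcubic, Hk | exact Hv].
    intros u Hu; apply (pd_pos _ (cubic c) p);
      [exact Hp | reflexivity | apply has_pd_cubic, Hp | exact Hu].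
Qed.

End CubicPotential.

Lemma d3_ratio_sym12 c a b d w : d3_ratio c a b d w = d3_ratio c b a d w.
Proof. unfold d3_ratio; rewrite d3cubic_sym12; reflexivity. Qed.

Lemma d3_ratio_sym23 c a b d w : d3_ratio c a b d w = d3_ratio c a d b w.
Proof. unfold d3_ratio; rewrite d3cubic_sym23; reflexivity. Qed.

Lemma euler_grad_log c a w : 0 < cubic c w ->
  sum3 (fun m => hess_pot c a m w * w m) = grad_log c a w.
Proof.
  intro Hw.
  transitivity (grad_log c a w * sum3 (fun m => dcubic c m w * w m) / cubic c w
                - sum3 (fun m => d2cubic c a m w * w m) / cubic c w).
  - unfold hess_pot, grad_log, sum3; field; lra.
  - rewrite euler_cubic, euler_dcubic; unfold grad_log; field; lra.
Qed.

Lemma euler_d3_ratio c a b w : 0 < cubic c w ->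
  sum3 (fun m => d3_ratio c a b m w * w m) = grad_log c a w * grad_log c b w - hess_pot c a b w.
Proof. intro Hw; unfold d3_ratio, hess_pot, d2cubic, sum3; field; lra. Qed.

Lemma euler_degree c w : 0 < cubic c w -> sum3 (fun m => grad_log c m w * w m) = 3.
Proof.
  intro Hw; transitivity (sum3 (fun m => dcubic c m w * w m) / cubic c w).
  - unfold grad_log, sum3; field; lra.
  - rewrite euler_cubic; field; lra.
Qed.

Lemma metric_at c i j x y : (i < 3)%nat -> (j < 3)%nat -> 0 < cubic c y ->
  gmet (cubic c) i j x y = RtoC (hess_pot c i j y / 4).
Proof. intros; rewrite gmet_lift; unfold lift, RtoC; rewrite gcoef_cubic; auto. Qed.

Lemma dt_metric_at c i j k x y :
  (i < 3)%nat -> (j < 3)%nat -> (k < 3)%nat -> 0 < cubic c y ->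
  dt (gmet (cubic c) i j) k x y = (0, - pot3_c c i j k y / 8).
Proof.
  intros; rewrite gmet_lift, dt_real; unfold lift; rewrite pd_gcoef by assumption.
  f_equal; field.
Qed.

Lemma dtb_metric_at c i j l x y :
  (i < 3)%nat -> (j < 3)%nat -> (l < 3)%nat -> 0 < cubic c y ->
  dtb (gmet (cubic c) i j) l x y = (0, pot3_c c i j l y / 8).
Proof.
  intros; rewrite gmet_lift, dtb_real; unfold lift; rewrite pd_gcoef by assumption.
  f_equal; field.
Qed.

Lemma dtdtb_metric_at c i j k l x y :
  (i < 3)%nat -> (j < 3)%nat -> (k < 3)%nat -> (l < 3)%nat -> 0 < cubic c y ->
  dt (dtb (gmet (cubic c) i j) l) k x y = (pot4_c c i j l k y / 16, 0).
Proof.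
  intros; rewrite gmet_lift, dtb_real, dt_imag; unfold lift; rewrite pd2_gcoef by assumption.
  f_equal; field.
Qed.

Lemma Csum3_ext (F G : nat -> Cx) :
  (forall e, (e < 3)%nat -> F e = G e) -> Csum3 F = Csum3 G.
Proof. intro E; unfold Csum3; rewrite !E by lia; reflexivity. Qed.

(* A two-sided inverse of a real matrix is real, and its real part is the real inverse:
   the imaginary part B satisfies B = B (g A) = (B g) A = 0. *)
Lemma inverse_of_real_matrix (g : nat -> nat -> R) (Z : nat -> nat -> Cx) :
  (forall i d, (i < 3)%nat -> (d < 3)%nat ->
     Csum3 (fun e => Cmul (RtoC (g i e)) (Z e d)) = Cdelta i d) ->
  (forall e j, (e < 3)%nat -> (j < 3)%nat ->
     Csum3 (fun d => Cmul (Z e d) (RtoC (g d j))) = Cdelta e j) ->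
  exists A : nat -> nat -> R,
    (forall e d, (e < 3)%nat -> (d < 3)%nat -> Z e d = RtoC (A e d)) /\
    (forall i d, (i < 3)%nat -> (d < 3)%nat -> sum3 (fun e => g i e * A e d) = kron i d).
Proof.
  intros Hleft Hright.
  assert (Left : forall i d, (i < 3)%nat -> (d < 3)%nat ->
    sum3 (fun e => g i e * fst (Z e d)) = kron i d /\ sum3 (fun e => g i e * snd (Z e d)) = 0).
  { intros i d Hi Hd; specialize (Hleft i d Hi Hd).
    unfold Csum3, Cadd, Cmul, RtoC, Cdelta in Hleft; unfold sum3, kron; cbn [fst snd] in Hleft.
    destruct (Nat.eqb i d); injection Hleft; intros; split; lra. }
  assert (Right_imag : forall e j, (e < 3)%nat -> (j < 3)%nat ->
    sum3 (fun d => snd (Z e d) * g d j) = 0).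
  { intros e j He Hj; specialize (Hright e j He Hj).
    unfold Csum3, Cadd, Cmul, RtoC, Cdelta in Hright; unfold sum3; cbn [fst snd] in Hright.
    destruct (Nat.eqb e j); injection Hright; intros; lra. }
  assert (Imag0 : forall e d, (e < 3)%nat -> (d < 3)%nat -> snd (Z e d) = 0).
  { intros e d He Hd.
    rewrite <- (sum3_kron_r d (fun m => snd (Z e m))) by exact Hd.
    transitivity (sum3 (fun n => sum3 (fun m => snd (Z e m) * g m n) * fst (Z n d))).
    - rewrite (sum3_ext _ (fun m => sum3 (fun n => g m n * fst (Z n d)) * snd (Z e m)))
        by (intros m Hm; rewrite (proj1 (Left m d Hm Hd)); reflexivity).
      unfold sum3; ring.
    - rewrite (sum3_ext _ (fun n => 0 * fst (Z n d)))
        by (intros n Hn; rewrite Right_imag by assumption; reflexivity).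
      unfold sum3; ring. }
  exists (fun e d => fst (Z e d)); split.
  - intros e d He Hd; unfold RtoC; rewrite <- (Imag0 e d He Hd); destruct (Z e d); reflexivity.
  - intros; apply Left; assumption.
Qed.

(* The curvature of the AMWP metric of a ternary cubic form: the curvature and the claimed
   right-hand side are both real; with G = (g^{-1}) / 4 the inverse of H, their real parts
   are (1/16) times the two sides of tube_curvature_identity. *)
Theorem lemma2p9 (c : nat -> nat -> nat -> R) (x y : vec) (Hinv : nat -> nat -> Cx) :
  in_index_cone (cubic c) y ->
  (* Hinv is the inverse matrix of (g_{i jbar}(x,y)) : Hinv e d = g^{ebar d} *)
  (forall i d, (i < 3)%nat -> (d < 3)%nat ->
     Csum3 (fun e => Cmul (gmet (cubic c) i e x y) (Hinv e d)) = Cdelta i d) ->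
  (forall e j, (e < 3)%nat -> (j < 3)%nat ->
     Csum3 (fun d => Cmul (Hinv e d) (gmet (cubic c) d j x y)) = Cdelta e j) ->
  forall i j k l, (i < 3)%nat -> (j < 3)%nat -> (k < 3)%nat -> (l < 3)%nat ->
    curv (cubic c) Hinv i j k l x y =
    Csub (Cadd (Cmul (gmet (cubic c) i j x y) (gmet (cubic c) k l x y))
               (Cmul (gmet (cubic c) i l x y) (gmet (cubic c) k j x y)))
         (Csum3 (fun p => Csum3 (fun q =>
            Cmul (Hinv q p)
              (RtoC (f3 (cubic c) i k p y * f3 (cubic c) j l q y
                     / (64 * (cubic c y) ^ 2)))))).
Proof.
  intros [Hy _] Hleft Hright i j k l Hi Hj Hk Hl.
  destruct (inverse_of_real_matrix (fun a b => hess_pot c a b y / 4) Hinv) as [A [HA Hinv_left]].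
  { intros a d Ha Hd; rewrite <- (Hleft a d Ha Hd).
    apply Csum3_ext; intros e He; rewrite metric_at by assumption; reflexivity. }
  { intros e b He Hb; rewrite <- (Hright e b He Hb).
    apply Csum3_ext; intros d Hd; rewrite metric_at by assumption; reflexivity. }
  assert (HG : forall a d, (a < 3)%nat -> (d < 3)%nat ->
                 sum3 (fun e => hess_pot c a e y * (A e d / 4)) = kron a d).
  { intros a d Ha Hd; rewrite <- Hinv_left by assumption; unfold sum3; field. }
  pose proof (tube_curvature_identity _ _ _ (fun e d => A e d / 4) y
    (fun a b => hess_pot_sym c a b y)
    (fun a b d => d3_ratio_sym12 c a b d y) (fun a b d => d3_ratio_sym23 c a b d y) HG
    (fun a => euler_grad_log c a y Hy) (fun a b => euler_d3_ratio c a b y Hy) (euler_degree c y Hy)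
    i j k l Hi Hj Hk Hl) as Key.
  assert (Hr : forall p q, d3cubic c i k p * d3cubic c j l q / (64 * cubic c y ^ 2)
                           = d3_ratio c i k p y * d3_ratio c j l q y / 64)
    by (intros; unfold d3_ratio; field; lra).
  unfold curv, Csum3.
  rewrite (dtdtb_metric_at c), !(metric_at c), !(dt_metric_at c), !(dtb_metric_at c),
    !(f3_cubic c), !HA, !Hr by (assumption || lia).
  unfold sum3 in Key; unfold pot3_c, pot4_c, Csub, Cadd, Cmul, RtoC; cbn [fst snd].
  f_equal; [lra | ring].
Qed.
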